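(* Consider a Markov decision process with finite state set $S$, finite action set $A$, transition kernel $T(s'\mid s,a)$, initial state distribution $p_0$ and discount factor $\gamma\in[0,1)$. Let $\beta>0$, $\alpha\in[0,1)$, let $\mu^U(a\mid s)$ be a policy with $\mu^U(a\mid s)>0$ for all $(s,a)$, let $d^U$ be a probability distribution on $S\times A$, and let $\Psi:S\times A\to\mathbb{R}$ be any function. For $Q:S\times A\to\mathbb{R}$ and a policy $\pi$ define $$V_Q^\pi(s)=\mathbb{E}_{a\sim\pi(\cdot\mid s)}\Big[Q(s,a)-\beta\log\frac{\pi(a\mid s)}{\mu^U(a\mid s)}\Big],\qquad \mathcal{T}^\pi[Q](s,a)=Q(s,a)-\gamma\,\mathbb{E}_{s'\sim T(\cdot\mid s,a)}\big[V_Q^\pi(s')\big],$$ $$L(Q,\pi)=(1-\gamma)\,\mathbb{E}_{s\sim p_0}\big[V_Q^\pi(s)\big]+(1-\alpha)\,\mathbb{E}_{(s,a)\sim d^U}\Big[\exp\Big(\frac{\Psi(s,a)-\mathcal{T}^\pi[Q](s,a)}{1-\alpha}\Big)\Big],$$ and, with $\delta(s,a)=\exp\big(\frac{\Psi(s,a)}{1-\alpha}\big)$, $$\widetilde{L}(Q,\pi)=(1-\gamma)\,\mathbb{E}_{s\sim p_0}\big[V_Q^\pi(s)\big]-\mathbb{E}_{(s,a)\sim d^U}\big[\delta(s,a)\,\mathcal{T}^\pi[Q](s,a)\big]+(1-\alpha)\,\mathbb{E}_{(s,a)\sim d^U}\big[\delta(s,a)\big].$$ Then $\widetilde{L}(Q,\pi)\le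 L(Q,\pi)$ for all $Q$ and $\pi$, with equality when $\mathcal{T}^\pi[Q](s,a)=0$ for all $(s,a)$.
   Context: In the paper, $\mu^U$ is the behavior policy of the union dataset, $d^U$ its state-action distribution, and $\Psi(s,a)=\log\frac{d^G(s,a)}{d^U(s,a)}-\alpha\log\frac{d^B(s,a)}{d^U(s,a)}$; the result holds for any real-valued $\Psi$. *)

From mathcomp Require Import all_boot all_order all_algebra.
From mathcomp Require Import reals sequences exp.
Set Implicit Arguments. Unset Strict Implicit. Unset Printing Implicit Defensive.
Import Order.TTheory GRing.Theory Num.Theory.
Local Open Scope ring_scope.

Section Defs.
Variables (R : realType) (S A : finType).

Definition is_distr (T : finType) (p : T -> R) : Prop :=
  (forall x, 0 <= p x) /\ \sum_(x : T) p x = 1.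

Definition is_policy (pi : S -> A -> R) : Prop := forall s, is_distr (pi s).

Definition is_kernel (T : S -> A -> S -> R) : Prop := forall s a, is_distr (T s a).

Definition Vsoft (beta : R) (muU : S -> A -> R) (Q : S -> A -> R)
    (pi : S -> A -> R) (s : S) : R :=
  \sum_(a : A) pi s a * (Q s a - beta * ln (pi s a / muU s a)).

Definition Tpi (gamma beta : R) (T : S -> A -> S -> R) (muU : S -> A -> R)
    (Q : S -> A -> R) (pi : S -> A -> R) (s : S) (a : A) : R :=
  Q s a - gamma * \sum_(s' : S) T s a s' * Vsoft beta muU Q pi s'.

Definition Lobj (gamma beta alpha : R) (T : S -> A -> S -> R) (p0 : S -> R)
    (muU : S -> A -> R) (dU : S * A -> R) (Psi : S -> A -> R)
    (Q : S -> A -> R) (pi : S -> A -> R) : R :=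
  (1 - gamma) * (\sum_(s : S) p0 s * Vsoft beta muU Q pi s)
  + (1 - alpha) * \sum_(sa : S * A) dU sa *
       expR ((Psi sa.1 sa.2 - Tpi gamma beta T muU Q pi sa.1 sa.2) / (1 - alpha)).

Definition delta (alpha : R) (Psi : S -> A -> R) (s : S) (a : A) : R :=
  expR (Psi s a / (1 - alpha)).

Definition Ltilde (gamma beta alpha : R) (T : S -> A -> S -> R) (p0 : S -> R)
    (muU : S -> A -> R) (dU : S * A -> R) (Psi : S -> A -> R)
    (Q : S -> A -> R) (pi : S -> A -> R) : R :=
  (1 - gamma) * (\sum_(s : S) p0 s * Vsoft beta muU Q pi s)
  - (\sum_(sa : S * A) dU sa * (delta alpha Psi sa.1 sa.2 *
                                Tpi gamma beta T muU Q pi sa.1 sa.2))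
  + (1 - alpha) * \sum_(sa : S * A) dU sa * delta alpha Psi sa.1 sa.2.

End Defs.

From mathcomp Require Import all_boot all_order all_algebra.
From mathcomp Require Import reals sequences exp.
From mathcomp Require Import ring.
Import Order.TTheory GRing.Theory Num.Theory.
Local Open Scope ring_scope.

(* Both objectives share the value term; their [d^U]-parts compare pointwise
   because [Ltilde] replaces [exp(-t/(1-alpha))] by its tangent line
   [1 - t/(1-alpha)] at [t = 0], which lies below the convex exponential and
   touches it exactly at [t = 0]. *)

Lemma expR_tangent_le (R : realType) (c p t : R) : 0 < c ->
  expR (p / c) * (c - t) <= c * expR ((p - t) / c).
Proof.
move=> c_gt0.
have tangent : 1 - t / c <= expR (- (t / c)).
  exact: expR_ge1Dx.
have -> : expR (p / c) * (c - t) = c * expR (p / c) * (1 - t / c).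
  by field; rewrite gt_eqF.
rewrite mulrBl expRD mulrA.
by apply: ler_wpM2l => //; rewrite mulr_ge0 ?ltW ?expR_gt0.
Qed.

Section Objectives.
Variables (R : realType) (S A : finType).
Variables (T : S -> A -> S -> R) (p0 : S -> R) (gamma beta alpha : R).
Variables (muU : S -> A -> R) (dU : S * A -> R) (Psi : S -> A -> R).
Variables (Q pi : S -> A -> R).

Let value := (1 - gamma) * \sum_(s : S) p0 s * Vsoft beta muU Q pi s.
Let tpi (sa : S * A) := Tpi gamma beta T muU Q pi sa.1 sa.2.

Lemma Ltilde_split : Ltilde gamma beta alpha T p0 muU dU Psi Q pi =
  value + \sum_sa dU sa * (delta alpha Psi sa.1 sa.2 * ((1 - alpha) - tpi sa)).
Proof.
rewrite /Ltilde -addrA; congr (_ + _).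
rewrite big_distrr -sumrN -big_split /=; apply: eq_bigr => sa _.
by rewrite /tpi; ring.
Qed.

Lemma Lobj_split : Lobj gamma beta alpha T p0 muU dU Psi Q pi =
  value + \sum_sa dU sa * ((1 - alpha) * expR ((Psi sa.1 sa.2 - tpi sa) / (1 - alpha))).
Proof.
rewrite /Lobj; congr (_ + _).
by rewrite big_distrr; apply: eq_bigr => sa _; rewrite mulrCA.
Qed.

End Objectives.

Theorem proposition4p3 (R : realType) (S A : finType)
    (T : S -> A -> S -> R) (p0 : S -> R) (gamma beta alpha : R)
    (muU : S -> A -> R) (dU : S * A -> R) (Psi : S -> A -> R) :
  is_kernel T -> is_distr p0 -> 0 <= gamma -> gamma < 1 ->
  0 < beta -> 0 <= alpha -> alpha < 1 ->
  is_policy muU -> (forall s a, 0 < muU s a) -> is_distr dU ->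
  forall (Q : S -> A -> R) (pi : S -> A -> R), is_policy pi ->
    Ltilde gamma beta alpha T p0 muU dU Psi Q pi
      <= Lobj gamma beta alpha T p0 muU dU Psi Q pi /\
    ((forall s a, Tpi gamma beta T muU Q pi s a = 0) ->
      Ltilde gamma beta alpha T p0 muU dU Psi Q pi
        = Lobj gamma beta alpha T p0 muU dU Psi Q pi).
Proof.
move=> _ _ _ _ _ _ alpha_lt1 _ _ [dU_ge0 _] Q pi _.
have c_gt0 : 0 < 1 - alpha by rewrite subr_gt0.
rewrite Ltilde_split Lobj_split; split.
  rewrite lerD2l; apply: ler_sum => sa _.
  by apply: ler_wpM2l => //; exact: expR_tangent_le.
move=> Tpi0; congr (_ + _); apply: eq_bigr => sa _.
by rewrite Tpi0 !subr0 [delta _ _ _ _ * _]mulrC.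
Qed.
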